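(* Let $p$ be a prime, $q$ a power of $p$, and $F$ a field of characteristic $p$ containing $\mathbb{F}_q$. Let $L\in F[x]$ be a monic $q$-polynomial of $q$-degree $n\ge1$ whose coefficient of $x$ is nonzero, let $E$ be its splitting field over $F$, and let $G=\mathrm{Gal}(E/F)$, regarded as a subgroup of $GL(n,q)$ via its linear action on the $\mathbb{F}_q$-space $V$ of roots of $L$. Let $\alpha_1,\dots,\alpha_n$ be an $\mathbb{F}_q$-basis of $V$ and $\delta=\det\big(\alpha_i^{q^{j-1}}\big)_{1\le i,j\le n}$. Then $G\le SL(n,q)$ if and only if $\delta\in F$.
   Context: A $q$-polynomial over $F$ is a polynomial $\sum_{i=0}^n a_i x^{q^i}\in F[x]$; with $a_n\ne0$ its $q$-degree is $n$. When the coefficient of $x$ is nonzero the roots of $L$ in $E$ are distinct and form an $n$-dimensional $\mathbb{F}_q$-vector space $V$ on which $G$ acts $\mathbb{F}_q$-linearly. *)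

From HB Require Import structures.
From mathcomp Require Import all_boot all_order all_algebra all_fingroup all_field.
Set Implicit Arguments. Unset Strict Implicit. Unset Printing Implicit Defensive.
Import GRing.Theory.
Local Open Scope ring_scope.

Definition qlin_poly (F : fieldType) (q n : nat) (a : 'I_n.+1 -> F) : {poly F} :=
  \sum_(i < n.+1) a i *: 'X^(q ^ i)%N.

(* al_1..al_n is an F_q-basis of the F_q-space V of roots of P in E, where
   F_q = {c in E | c^q = c}. *)
Definition Fq_basis_of_roots (E : fieldType) (q n : nat) (P : {poly E})
    (al : 'I_n -> E) : Prop :=
  [/\ (forall i, root P (al i)),
      (forall c : 'I_n -> E, (forall i, c i ^+ q = c i) ->
          \sum_(i < n) c i * al i = 0 -> forall i, c i = 0) &
      (forall x, root P x -> exists c : 'I_n -> E,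
          (forall i, c i ^+ q = c i) /\ x = \sum_(i < n) c i * al i)].

Definition gal_matrix (F : fieldType) (E : splittingFieldType F) (q n : nat)
    (al : 'I_n -> E) (s : gal_of {:E}) (M : 'M[E]_n) : Prop :=
  (forall i j, M i j ^+ q = M i j) /\
  (forall i, s (al i) = \sum_(j < n) M i j * al j).

Definition gal_in_SL (F : fieldType) (E : splittingFieldType F) (q n : nat)
    (al : 'I_n -> E) : Prop :=
  forall s, s \in 'Gal({:E} / 1%AS)%g ->
    forall M : 'M[E]_n, gal_matrix q al s M -> \det M = 1.

From Pilot Require Import Defs.
From HB Require Import structures.
From mathcomp Require Import all_boot all_order all_algebra all_fingroup all_field.
Set Implicit Arguments.
Unset Strict Implicit.
Unset Printing Implicit Defensive.
Import GRing.Theory.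
Local Open Scope ring_scope.

(* Let A = (al_i^(q^j)) be the Moore matrix and delta = det A. If s in Gal(E/F)
   acts on the basis al by a matrix M with entries in F_q, then s(A) = M A,
   because s commutes with q-th powers and F_q is fixed by x |-> x^q; hence
   s(delta) = det M * delta. Moreover delta <> 0: a kernel vector of A^T gives a
   nonzero q-polynomial of degree < q^n vanishing on the F_q-span of the al_i,
   which contains the q^n distinct roots of the separable L. So det M = 1 for
   all s iff delta is fixed by Gal(E/F), iff delta in F as E/F is Galois. *)

Definition moore_mx (R : pzSemiRingType) (q n : nat) (x : 'I_n -> R) : 'M[R]_n :=
  \matrix_(i, j) x i ^+ (q ^ j).

Lemma fixed_exprXn (R : pzSemiRingType) (q j : nat) (c : R) :
  c ^+ q = c -> c ^+ (q ^ j) = c.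
Proof.
move=> cq; elim: j => [|j IHj]; first by rewrite expn0 expr1.
by rewrite expnS exprM cq IHj.
Qed.

Lemma exprn_sum_pchar (R : comNzRingType) (m : nat) (I : Type) (r : seq I)
    (P : pred I) (f : I -> R) :
  [pchar R].-nat m -> (\sum_(i <- r | P i) f i) ^+ m = \sum_(i <- r | P i) f i ^+ m.
Proof.
move=> mR; have m_gt0 : (0 < m)%N by move: mR; case: (m).
apply: (big_morph (fun x => x ^+ m)) => [x y|]; first exact: exprDn_pchar.
by rewrite expr0n gtn_eqF.
Qed.

Section FrobeniusPower.

Variables (R : comNzRingType) (q : nat).
Hypothesis qR : [pchar R].-nat q.

Lemma exprXn_Fq_comb n (c x : 'I_n -> R) j :
  (forall i, c i ^+ q = c i) ->
  (\sum_i c i * x i) ^+ (q ^ j) = \sum_i c i * x i ^+ (q ^ j).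
Proof.
move=> c_fixed; rewrite exprn_sum_pchar ?pnatX ?qR //.
by apply: eq_bigr => i _; rewrite exprMn fixed_exprXn.
Qed.

Lemma map_moore_mx n (x : 'I_n -> R) (f : {rmorphism R -> R}) (M : 'M[R]_n) :
    (forall i j, M i j ^+ q = M i j) -> (forall i, f (x i) = \sum_j M i j * x j) ->
  map_mx f (moore_mx q x) = M *m moore_mx q x.
Proof.
move=> M_fixed fx; apply/matrixP => i j; rewrite !mxE rmorphXn fx.
by rewrite exprXn_Fq_comb //; apply: eq_bigr => l _; rewrite mxE.
Qed.

Lemma rmorph_det_moore n (x : 'I_n -> R) (f : {rmorphism R -> R}) (M : 'M[R]_n) :
    (forall i j, M i j ^+ q = M i j) -> (forall i, f (x i) = \sum_j M i j * x j) ->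
  f (\det (moore_mx q x)) = \det M * \det (moore_mx q x).
Proof. by move=> M_fixed fx; rewrite -det_map_mx (map_moore_mx M_fixed fx) det_mulmx. Qed.

End FrobeniusPower.

Section QLinearPolynomials.

Variables (F : fieldType) (q : nat).

Lemma horner_qlin_poly_Fq_comb n (a : 'I_n.+1 -> F) m (c x : 'I_m -> F) :
    [pchar F].-nat q -> (forall i, c i ^+ q = c i) ->
  (qlin_poly q a).[\sum_i c i * x i] = \sum_i c i * (qlin_poly q a).[x i].
Proof.
move=> qF c_fixed; rewrite /qlin_poly horner_sum.
under eq_bigr do rewrite hornerZ hornerXn exprXn_Fq_comb // mulr_sumr.
rewrite exchange_big /=; apply: eq_bigr => i _.
rewrite horner_sum mulr_sumr; apply: eq_bigr => j _.
by rewrite hornerZ hornerXn mulrCA.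
Qed.

Hypothesis q_gt1 : (1 < q)%N.

Lemma coef_qlin_poly n (a : 'I_n.+1 -> F) (i : 'I_n.+1) : (qlin_poly q a)`_(q ^ i) = a i.
Proof.
rewrite /qlin_poly coef_sum (bigD1 i) //= coefZ coefXn eqxx mulr1 big1 ?addr0 //.
move=> j j_neq_i; rewrite coefZ coefXn eqn_exp2l //.
have /negPf -> : nat_of_ord i != j by rewrite eq_sym.
by rewrite mulr0.
Qed.

Lemma size_qlin_poly_le n (a : 'I_n.+1 -> F) : (size (qlin_poly q a) <= (q ^ n).+1)%N.
Proof.
apply: (leq_trans (size_sum _ _ _)); apply/bigmax_leqP => i _.
apply: (leq_trans (size_scale_leq _ _)).
by rewrite size_polyXn ltnS leq_exp2l // -ltnS.
Qed.

Lemma size_qlin_poly n (a : 'I_n.+1 -> F) :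
  a ord_max != 0 -> size (qlin_poly q a) = (q ^ n).+1.
Proof.
move=> a_max; rewrite /qlin_poly big_ord_recr /= addrC size_polyDl.
  by rewrite size_scale // size_polyXn.
rewrite size_scale // size_polyXn ltnS.
apply: (leq_trans (size_sum _ _ _)); apply/bigmax_leqP => i _.
apply: (leq_trans (size_scale_leq _ _)).
by rewrite size_polyXn ltn_exp2l.
Qed.

Lemma deriv_qlin_poly p n (a : 'I_n.+1 -> F) :
  p \in [pchar F] -> (p %| q)%N -> (qlin_poly q a)^`() = (a ord0)%:P.
Proof.
move=> pF p_dvd_q; rewrite /qlin_poly raddf_sum big_ord_recl /= big1 ?addr0 => [|i _].
  by rewrite derivZ expn0 derivXn expr0 mulr1n alg_polyC.
have /eqP qi0 : (q ^ (bump 0 i))%:R == 0 :> F by rewrite -(dvdn_pcharf pF) dvdn_exp.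
by rewrite derivZ derivXn -mulr_natl -polyC_natr qi0 polyC0 mul0r scaler0.
Qed.

Lemma separable_qlin_poly p n (a : 'I_n.+1 -> F) :
  p \in [pchar F] -> (p %| q)%N -> a ord0 != 0 -> separable_poly (qlin_poly q a).
Proof.
move=> pF p_dvd_q a0; rewrite unlock (deriv_qlin_poly _ pF p_dvd_q) -alg_polyC.
by rewrite coprimepZr ?coprimep1.
Qed.

End QLinearPolynomials.

Lemma moore_det_neq0 (F : fieldType) (q n : nat) (x : 'I_n -> F) (rs : seq F) :
    [pchar F].-nat q -> (1 < q)%N -> uniq rs -> (q ^ n <= size rs)%N ->
    (forall r, r \in rs -> exists c : 'I_n -> F,
        (forall i, c i ^+ q = c i) /\ r = \sum_i c i * x i) ->
  \det (moore_mx q x) != 0.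
Proof.
case: n x => [|m] x qF q_gt1 rs_uniq rs_size rs_span; first by rewrite det_mx00 oner_neq0.
rewrite -det_tr; apply/det0P => -[v v_neq0 vA0].
pose Q := qlin_poly q (v 0).
have Q_neq0 : Q != 0.
  move: v_neq0; apply: contra_neq => Q0; apply/rowP => j.
  by rewrite -(coef_qlin_poly q_gt1) -/Q Q0 coef0 mxE.
have Qx i : Q.[x i] = 0.
  have := congr1 (fun u : 'rV_m.+1 => u 0 i) vA0; rewrite !mxE => <-.
  rewrite /Q /qlin_poly horner_sum; apply: eq_bigr => j _.
  by rewrite hornerZ hornerXn !mxE.
have Q_rs : all (root Q) rs.
  apply/allP => r /rs_span [c [c_fixed ->]]; apply/rootP.
  by rewrite horner_qlin_poly_Fq_comb // big1 // => i _; rewrite Qx mulr0.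
have := leq_trans (max_poly_roots Q_neq0 Q_rs rs_uniq) (size_qlin_poly_le q_gt1 _).
by rewrite ltnS leqNgt (leq_trans _ rs_size) // expnS ltn_Pmull // expn_gt0 ltnW.
Qed.

Section GaloisActionOnRoots.

Variables (F : fieldType) (E : splittingFieldType F) (q n : nat) (al : 'I_n -> E).
Variable P : {poly E}.
Hypotheses (qE : [pchar E].-nat q) (P_over : P \is a polyOver 1%VS).
Hypothesis al_root : forall i, root P (al i).
Hypothesis roots_span : forall x, root P x -> exists c : 'I_n -> E,
  (forall i, c i ^+ q = c i) /\ x = \sum_i c i * al i.

Lemma gal_matrix_exists s : s \in 'Gal({:E} / 1%AS)%g -> exists M, Defs.gal_matrix q al s M.
Proof.
move=> s_gal.
have s_root i : root P (s (al i)).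
  by rewrite -(fixedPoly_gal (sub1v _) s_gal P_over) rmorph_root ?al_root.
have [c c_row] := fin_all_exists (fun i => roots_span (s_root i)).
exists (\matrix_(i, j) c i j); split => [i j|i]; rewrite ?mxE; first exact: (c_row i).1.
by rewrite (c_row i).2; apply: eq_bigr => j _; rewrite mxE.
Qed.

Lemma gal_det_moore s M :
  Defs.gal_matrix q al s M -> s (\det (moore_mx q al)) = \det M * \det (moore_mx q al).
Proof. by case=> M_fixed sM; apply: rmorph_det_moore. Qed.

Lemma gal_in_SL_det_moore_fixed :
  galois 1 {:E} -> gal_in_SL q al -> \det (moore_mx q al) \in 1%VS.
Proof.
move=> /galois_fixedField <- SL; apply/fixedFieldP; first exact: memvf.
move=> s s_gal; have [M sM] := gal_matrix_exists s_gal.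
by rewrite (gal_det_moore sM) (SL s s_gal M sM) mul1r.
Qed.

Lemma det_moore_fixed_gal_in_SL :
  \det (moore_mx q al) != 0 -> \det (moore_mx q al) \in 1%VS -> gal_in_SL q al.
Proof.
move=> det_neq0 det_fixed s s_gal M sM; apply: (mulIf det_neq0).
by rewrite mul1r -(gal_det_moore sM) (fixed_gal (sub1v _) s_gal det_fixed).
Qed.

End GaloisActionOnRoots.

Theorem corollary2p3 (p k n : nat) (F : fieldType) (E : splittingFieldType F)
    (a : 'I_n.+1 -> F) (al : 'I_n -> E) :
  prime p -> p \in [pchar F] -> (0 < k)%N ->
  (* F contains F_q, q = p^k: x^q - x splits over F *)
  (exists r : seq F, 'X^(expn p k) - 'X = \prod_(x <- r) ('X - x%:P)) ->
  (0 < n)%N -> a ord_max = 1 -> a ord0 != 0 ->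
  (* E is the splitting field of L over F *)
  splittingFieldFor 1%VS (map_poly (in_alg E) (qlin_poly (p ^ k)%N a)) fullv ->
  Fq_basis_of_roots (p ^ k)%N (map_poly (in_alg E) (qlin_poly (p ^ k)%N a)) al ->
  gal_in_SL (p ^ k)%N%N al <->
  \det (\matrix_(i < n, j < n) (al i ^+ ((p ^ k) ^ j)%N)) \in 1%VS.
Proof.
move=> p_prime pF k_gt0 _ _ a_max a0 splitP [al_root _ roots_span].
set q := (p ^ k)%N in splitP al_root roots_span *.
set P := map_poly _ _ in splitP al_root roots_span.
change (gal_in_SL q al <-> \det (moore_mx q al) \in 1%VS).
have qE : [pchar E].-nat q by rewrite pnatX (pnatE _ p_prime) (pchar_lalg E) pF.
have q_gt1 : (1 < q)%N by rewrite -(expn0 p) ltn_exp2l ?prime_gt1.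
have P_over : P \is a polyOver 1%VS by apply/polyOver1P; exists (qlin_poly q a).
have P_sep : separable_poly P.
  by rewrite separable_map (separable_qlin_poly pF) ?dvdn_exp.
have [rs P_rs _] := splitP.
have det_neq0 : \det (moore_mx q al) != 0.
  apply: (moore_det_neq0 qE q_gt1 (rs := rs)).
  - by rewrite -separable_prod_XsubC -(eqp_separable P_rs).
  - rewrite -ltnS -(size_prod_XsubC rs id) -(eqp_size P_rs) size_map_poly.
    by rewrite size_qlin_poly // a_max oner_neq0.
  - by move=> r; rewrite -root_prod_XsubC -(eqp_root P_rs) => /roots_span.
have E_galois : galois 1 {:E} by apply/splitting_galoisField; exists P.
split; first exact: (gal_in_SL_det_moore_fixed qE P_over al_root roots_span).
exact: (det_moore_fixed_gal_in_SL qE det_neq0).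
Qed.
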